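(* Let $\rho=\rho_n>0$ and let $m=m_n>1$ be integers. For $m=2,3,\dots$ let $\tilde\Omega_n(m)=\{\omega\in\Omega:\max_{1\le l\le L_n(\rho)}|C_{n,l}(\rho)|<m\}$. If $\rho\ge\rho_n^+(m)\equiv\frac1m\Big(1+\frac{(m+2)\log n+\log m!}{n\log2}\Big)$, then $\mathbb P\big(\liminf_{n\to\infty}\tilde\Omega_n(m)\big)=1$.
   Context: Let $\mathcal V_n=\{-1,1\}^n$ with nearest-neighbour (hypercube) graph structure. Let $(g(x))_{x\in\mathcal V_n}$, $n\ge1$, be i.i.d. standard Gaussians on $(\Omega,\mathcal F,\mathbb P)$, $\beta>0$, and $w_n(x)=\exp(-\beta\sqrt ng(x))$. For $\rho>0$ let $r_n(\rho)$ be defined by $2^{\rho n}\mathbb P(w_n(x)\ge r_n(\rho))=1$ and $V_n(\rho)=\{x:w_n(x)\ge r_n(\rho)\}$. $C_{n,l}(\rho)$, $1\le l\le L_n(\rho)$, are the vertex sets of the connected components with at least two vertices of the subgraph of the hypercube induced on $V_n(\rho)$. *)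

From HB Require Import structures.
From mathcomp Require Import all_boot all_order all_algebra.
From mathcomp Require Import all_classical all_reals all_analysis.
Set Implicit Arguments. Unset Strict Implicit. Unset Printing Implicit Defensive.
Import Order.TTheory GRing.Theory Num.Theory.
Local Open Scope classical_set_scope.
Local Open Scope ring_scope.

(* Vertices of the hypercube V_n = {-1,1}^n, coded as boolean vectors
   (true <-> +1, false <-> -1). *)
Definition vtx (n : nat) := {ffun 'I_n -> bool}.

Definition hadj (n : nat) : rel (vtx n) :=
  fun x y => #|[set i | x i != y i]| == 1%N.

Definition induced_rel (n : nat) (V : {set vtx n}) : rel (vtx n) :=
  fun x y => [&& x \in V, y \in V & hadj x y].

Definition comp_of (n : nat) (V : {set vtx n}) (x : vtx n) : {set vtx n} :=
  [set y | connect (induced_rel V) x y].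

Definition big_components (n : nat) (V : {set vtx n}) : {set {set vtx n}} :=
  [set C : {set vtx n} | [exists x in V, (C == comp_of V x) && (1 < #|C|)%N]].

(* max_l |C_{n,l}| (0 if there are no such components) *)
Definition max_comp_size (n : nat) (V : {set vtx n}) : nat :=
  \max_(C in big_components V) #|C|.

Definition mutually_independent {R : realType} {d : measure_display}
  {T : measurableType d} (P : probability T R) (I : finType)
  (X : I -> T -> R) : Prop :=
  forall B : I -> set R, (forall i, measurable (B i)) ->
    P (\bigcap_(i in [set: I]) (X i @^-1` B i)) = (\prod_(i : I) P (X i @^-1` B i))%E.

Definition std_gaussian {R : realType} {d : measure_display}
  {T : measurableType d} (P : probability T R) (X : T -> R) : Prop :=
  forall B : set R, measurable B -> P (X @^-1` B) = normal_prob 0 1 B.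

Definition rho_plus {R : realType} (n m : nat) : R :=
  (m%:R)^-1 * (1 + ((m.+2)%:R * ln (n%:R) + ln ((m`!)%:R)) / (n%:R * ln 2)).

From HB Require Import structures.
From mathcomp Require Import all_boot all_order all_algebra.
From mathcomp Require Import all_classical all_reals all_analysis.
From mathcomp Require Import ring lra.
Import Order.TTheory GRing.Theory Num.Theory.
Set Implicit Arguments. Unset Strict Implicit. Unset Printing Implicit Defensive.

(* If a component of the subgraph induced on the open sites V_n has at least m
   vertices, then V_n contains a connected set (an animal) of exactly m
   vertices.  An animal is grown from a root by m - 1 steps, each flipping one
   coordinate of an earlier vertex, so there are at most 2^n m! n^m of them.
   By independence a fixed animal is open with probability p^m, p = 2^(-rho n),
   and rho >= rho_n^+(m) is exactly what makes the union bound
   2^n m! n^m p^m at most n^-2.  This is summable, so by Borel-Cantelli only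
   finitely many of these events occur almost surely. *)

Lemma connect_exit (T : finType) (e : rel T) (s : seq T) a p :
  a \in s -> path e a p -> last a p \notin s ->
  exists u z, [/\ u \in s, z \notin s, e u z & connect e a z].
Proof.
elim: p a => [a -> //|b p IH] a aS /= /andP [eab Hp] Hl.
case bS: (b \in s).
  have [u [z [uS zS euz cbz]]] := IH b bS Hp Hl.
  by exists u, z; split => //; apply: connect_trans cbz; apply: connect1.
by exists a, b; split => //; [rewrite bS | apply: connect1].
Qed.

Section Hypercube.
Variable n : nat.
Implicit Types (x y : vtx n) (V : {set vtx n}).

Definition flip_coord x (i : 'I_n) : vtx n :=
  [ffun j => if j == i then ~~ x j else x j].

Lemma hadjE x y : hadj x y = (#|[set i | x i != y i]| == 1).
Proof.
rewrite /hadj; congr (_ == _); apply: eq_card => i; rewrite inE.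
by apply/idP/idP; rewrite in_setE.
Qed.

Lemma hadj_flip x y : hadj x y -> exists i, y = flip_coord x i.
Proof.
rewrite hadjE => /cards1P [i Hi]; exists i; apply/ffunP => j; rewrite ffunE.
case: eqP => [->|/eqP ne].
  have : i \in [set i0 | x i0 != y i0] by rewrite Hi set11.
  by rewrite inE; case: (x i); case: (y i).
have : j \notin [set i0 | x i0 != y i0] by rewrite Hi inE.
by rewrite inE negbK => /eqP.
Qed.

Lemma comp_of_sub V x : x \in V -> comp_of V x \subset V.
Proof.
move=> xV; apply/fintype.subsetP => y; rewrite inE => /connectP [p Hp ->].
elim: p x xV Hp => [//|z p IH] x xV /= /andP [exz Hp].
by apply: IH Hp; case/and3P: exz.
Qed.

Lemma mem_comp_of V x : x \in comp_of V x.
Proof. by rewrite inE connect0. Qed.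

Lemma exists_big_component V M : 0 < M -> M <= max_comp_size V ->
  exists2 C, C \in big_components V & M <= #|C|.
Proof.
move=> M0 le_M; have [C0|] := posnP #|big_components V|.
  by move: le_M; rewrite /max_comp_size (big_pred0 _ _ _ _ (card0_eq C0)) leqn0 gtn_eqF.
move=> /(eq_bigmax_cond (fun C : {set vtx n} => #|C|)) [C CB eqC].
by exists C; rewrite // -eqC.
Qed.

Lemma exists_exit_neighbour V x (s : seq (vtx n)) :
  x \in s -> uniq s -> all [in comp_of V x] s -> size s < #|comp_of V x| ->
  exists u i, [/\ u \in s, flip_coord u i \notin s & flip_coord u i \in comp_of V x].
Proof.
move=> xs us sC lt_s.
have [y yC ys] : exists2 y, y \in comp_of V x & y \notin s.
  apply/exists_inP; apply: contraTT lt_s => /exists_inPn sub.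
  rewrite -leqNgt -(card_uniqP us); apply/subset_leq_card/fintype.subsetP => y yC.
  by have := sub y yC; rewrite negbK.
move: yC; rewrite inE => /connectP [p Hp ylast]; rewrite ylast in ys.
have [u [z [uS zS uz xz]]] := connect_exit xs Hp ys.
have [i zE] : exists i, z = flip_coord u i by apply: hadj_flip; case/and3P: uz.
by exists u, i; rewrite -zE; split; rewrite // inE.
Qed.

End Hypercube.

Lemma card_vtx n : #|vtx n| = 2 ^ n.
Proof. by rewrite card_ffun card_bool card_ord. Qed.

Section GrowthCodes.
Variables n M : nat.
Implicit Types (V : {set vtx n}).

Definition growth_code := {ffun 'I_M -> 'I_M * 'I_n}.

(* Step [k] appends the neighbour across coordinate [(f k).2] of the
   [(f k).1]-th vertex grown so far; the value of [f] at [0] is never read. *)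
Fixpoint grow (x0 : vtx n) (f : growth_code) (k : nat) : seq (vtx n) :=
  if k is k'.+1 then
    let s := grow x0 f k' in
    if insub k : option 'I_M is Some o
    then rcons s (flip_coord (nth x0 s (f o).1) (f o).2) else s
  else [:: x0].

(* Causality is what brings the number of codes down to [M`! * n ^ M]. *)
Definition causal_code (f : growth_code) := [forall o, (f o).1 <= o].

Definition grown_set (x0 : vtx n) f : {set vtx n} := [set x in grow x0 f M.-1].

Definition animals : {set {set vtx n}} :=
  [set grown_set c.1 c.2 | c in [set c : vtx n * growth_code |
     causal_code c.2 && (#|grown_set c.1 c.2| == M)]].

Definition set_code (f : growth_code) (o : 'I_M) v : growth_code :=
  [ffun o1 => if o1 == o then v else f o1].

Lemma grow_set_code (x0 : vtx n) f (o : 'I_M) v k :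
  k < o -> grow x0 (set_code f o v) k = grow x0 f k.
Proof.
elim: k => [//|k IH] lt_k /=; rewrite IH ?(ltn_trans _ lt_k) //.
case: insubP => [ o1 _ oE|//]; rewrite ffunE.
by case: eqP => // oo; move: lt_k; rewrite -oE oo ltnn.
Qed.

Lemma mem_grow0 (x0 : vtx n) f k : x0 \in grow x0 f k.
Proof.
elim: k => [|k IH] /=; first exact: mem_head.
by case: insubP => [ o _ _|//]; rewrite mem_rcons inE IH orbT.
Qed.

Lemma grow_extend (x0 : vtx n) f k u i : causal_code f -> k.+1 < M ->
  u \in grow x0 f k -> size (grow x0 f k) = k.+1 ->
  exists2 g, causal_code g &
    grow x0 g k.+1 = rcons (grow x0 f k) (flip_coord u i).
Proof.
move=> /forallP causal_f kM us sizes; set s := grow x0 f k in us sizes *.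
have lt_idx : index u s < k.+1 by rewrite -sizes index_mem.
pose o := Ordinal kM; pose v := (Ordinal (ltn_trans lt_idx kM), i).
exists (set_code f o v).
  apply/forallP => o1; rewrite ffunE; case: eqP => [->|_] //=.
  exact: ltnW.
rewrite /= grow_set_code //; case: insubP => [ o1 _ oE|]; last by rewrite kM.
by rewrite (_ : o1 = o) ?ffunE ?eqxx /= ?nth_index //; apply: val_inj.
Qed.

Lemma grow_in_comp V x k : 0 < n -> k < M -> M <= #|comp_of V x| ->
  exists f, [/\ causal_code f, uniq (grow x f k), size (grow x f k) = k.+1
              & all [in comp_of V x] (grow x f k)].
Proof.
move=> n0; elim: k => [M0 _|k IH kM le_M].
  exists [ffun o => (o, Ordinal n0)]; split; rewrite //= ?mem_comp_of //.
  by apply/forallP => o; rewrite ffunE.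
have [f [causal_f uniq_s size_s s_C]] := IH (ltnW kM) le_M.
have [|u [i [us fus fuC]]] := exists_exit_neighbour (mem_grow0 x f k) uniq_s s_C.
  by rewrite size_s (leq_trans kM).
have [g causal_g growE] := grow_extend i causal_f kM us size_s.
exists g; rewrite growE; split => //.
- by rewrite rcons_uniq fus uniq_s.
- by rewrite size_rcons size_s.
- by rewrite all_rcons fuC s_C.
Qed.

Lemma animal_sub_of_max_comp_size V : 1 < M -> M <= max_comp_size V ->
  exists2 S, S \in animals & S \subset V.
Proof.
move=> M1 le_M; have M0 := ltnW M1.
have [C] := exists_big_component M0 le_M.
rewrite inE => /existsP [x /andP [xV /andP [/eqP -> C1]]] le_MC.
have n0 : 0 < n.
  by move: (leq_trans C1 (max_card _)); rewrite card_vtx; case: (n).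
have lt_predM : M.-1 < M by rewrite ltn_predL.
have [f [causal_f uniq_s size_s s_C]] := grow_in_comp n0 lt_predM le_MC.
exists (grown_set x f).
  apply/imsetP; exists (x, f) => //.
  by rewrite inE /= causal_f /grown_set cardsE (card_uniqP uniq_s) size_s prednK ?eqxx.
apply: fintype.subset_trans (comp_of_sub xV); apply/fintype.subsetP => z.
by rewrite inE => /(allP s_C).
Qed.

End GrowthCodes.

Lemma card_le_ord M (o : 'I_M) : #|[pred j : 'I_M | j <= o]| <= o.+1.
Proof.
rewrite -(card_in_imset (f := fun j : 'I_M => (inord j : 'I_o.+1))).
  by apply: leq_trans (max_card _) _; rewrite card_ord.
by move=> a b Ha Hb /(congr1 val) /=; rewrite !inordK ?ltnS //; apply: val_inj.
Qed.

Lemma card_causal_codes n M :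
  #|[set f : growth_code n M | causal_code f]| <= M`! * n ^ M.
Proof.
have -> : #|[set f : growth_code n M | causal_code f]| =
    #|family (fun o : 'I_M => [pred c : 'I_M * 'I_n | c.1 <= o])|.
  by apply: eq_card => f; rewrite inE; apply/forallP/familyP => causal_f o;
    apply: causal_f.
rewrite card_family foldrE big_map big_enum /=.
apply: leq_trans (_ : \prod_(o < M) (o.+1 * n) <= _).
  apply: leq_prod => o _.
  have -> : #|[pred c : 'I_M * 'I_n | c.1 <= o]| =
            #|[predX [pred j : 'I_M | j <= o] & 'I_n]|.
    by apply: eq_card => -[a b]; rewrite !inE /= andbT.
  by rewrite cardX card_ord leq_mul2r card_le_ord orbT.
by rewrite big_split /= prod_nat_const card_ord fact_prod big_add1 big_mkord.
Qed.

Lemma card_animals n M : #|animals n M| <= 2 ^ n * (M`! * n ^ M).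
Proof.
apply: leq_trans (leq_imset_card _ _) _.
apply: leq_trans
  (_ : #|finset.setX [set: vtx n] [set f : growth_code n M | causal_code f]| <= _).
  by apply/subset_leq_card/fintype.subsetP => -[x f]; rewrite !inE /= => /andP [-> _].
by rewrite cardsX cardsT card_vtx leq_mul2l card_causal_codes orbT.
Qed.

Local Open Scope ring_scope.

Section RhoPlus.
Variable R : realType.

Lemma ln_animal_count (n M : nat) : (0 < n)%N ->
  ln ((2 ^ n * (M`! * n ^ M) * n ^ 2)%:R : R) =
  n%:R * ln 2 + ln M`!%:R + M.+2%:R * ln n%:R.
Proof.
move=> n0; have n0R : 0 < n%:R :> R by rewrite ltr0n.
have fact0 : 0 < M`!%:R :> R by rewrite ltr0n fact_gt0.
rewrite !natrM !natrX !lnM ?posrE ?mulr_gt0 ?exprn_gt0 // !lnXn //.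
by rewrite -[ln 2 *+ n]mulr_natr -[ln n%:R *+ M]mulr_natr -addn2 natrD; ring.
Qed.

Lemma animal_count_bound (n M : nat) (rho : R) : (0 < M)%N ->
  ((0 < n)%N -> rho_plus n M <= rho) ->
  (2 ^ n * (M`! * n ^ M))%:R * ((2 `^ (rho * n%:R))^-1) ^+ M <= (n%:R ^+ 2)^-1.
Proof.
move=> M0; have [->|n0 /(_ isT) le_rho] := posnP n.
  by rewrite exp0n // muln0 mul0r expr0n invr0.
have n0R : 0 < n%:R :> R by rewrite ltr0n.
have ln2_gt0 : 0 < ln 2 :> R by rewrite ln_gt0 // ltr1n.
have powM : (2 `^ (rho * n%:R)) ^+ M = 2 `^ (rho * n%:R * M%:R) :> R.
  by rewrite [RHS]powRrM powR_mulrn ?powR_ge0.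
rewrite exprVn powM ler_pdivrMr ?powR_gt0 // mulrC ler_pdivlMr ?exprn_gt0 //.
have count_gt0 : (0 < 2 ^ n * (M`! * n ^ M) * n ^ 2)%N.
  by rewrite !muln_gt0 !expn_gt0 fact_gt0 n0.
rewrite -natrX -natrM -ler_ln ?posrE ?powR_gt0 ?ltr0n //.
rewrite ln_animal_count // ln_powR.
have -> : n%:R * ln 2 + ln M`!%:R + M.+2%:R * ln n%:R =
          rho_plus n M * n%:R * M%:R * ln 2 :> R.
  by rewrite /rho_plus; field; rewrite !gt_eqF ?ltr0n.
by rewrite !ler_wpM2r ?ler0n // ltW.
Qed.

End RhoPlus.

Section InverseSquares.
Variable R : realType.

Lemma inv_sq_step (x : R) : 0 <= x ->
  2 - (x + 1)^-1 + ((x + 2) ^+ 2)^-1 <= 2 - (x + 2)^-1.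
Proof.
move=> x0; have x1 : 0 < x + 1 by lra.
have x2 : 0 < x + 2 by lra.
have telescope : (x + 1)^-1 - (x + 2)^-1 = ((x + 1) * (x + 2))^-1.
  by field; rewrite !gt_eqF.
have : ((x + 2) ^+ 2)^-1 <= ((x + 1) * (x + 2))^-1.
  by rewrite lef_pV2 ?posrE ?mulr_gt0 ?exprn_gt0 // expr2 ler_pM2r //; lra.
lra.
Qed.

(* The [k = 0] term is [0^-1 = 0]. *)
Lemma partial_sum_inv_sq N :
  \sum_(0 <= k < N.+2) ((k%:R : R) ^+ 2)^-1 <= 2 - (N.+1%:R)^-1.
Proof.
elim: N => [|N IH].
  by rewrite !big_nat_recr //= big_geq // expr0n /= invr0 expr1n invr1 !add0r; lra.
rewrite big_nat_recr //=; apply: le_trans (lerD IH (lexx _)) _.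
by have := inv_sq_step (ler0n R N); rewrite -[N.+2]addn2 -[N.+1]addn1 !natrD.
Qed.

Lemma nneseries_inv_sq_le2 : (\sum_(k <oo) (((k%:R : R) ^+ 2)^-1)%:E <= 2%:E)%E.
Proof.
apply: lime_le.
  by apply: is_cvg_nneseries => k _ _; rewrite lee_fin invr_ge0 exprn_ge0.
apply: nearW => N; rewrite sumEFin lee_fin.
apply: le_trans (_ : \sum_(0 <= k < N.+2) ((k%:R : R) ^+ 2)^-1 <= _).
  rewrite !big_nat_recr //= -addrA lerDl.
  by rewrite addr_ge0 // invr_ge0 exprn_ge0.
by apply: le_trans (partial_sum_inv_sq N) _; rewrite lerBlDr lerDl invr_ge0.
Qed.

End InverseSquares.

Local Open Scope classical_set_scope.

Lemma le_measure_bigsetU d (T : measurableType d) (R : realType)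
    (mu : {measure set T -> \bar R}) (I : Type) (s : seq I) (F : I -> set T) :
  (forall i, measurable (F i)) ->
  (mu (\big[setU/set0]_(i <- s) F i) <= \sum_(i <- s) mu (F i))%E.
Proof.
move=> mF; elim: s => [|i s IH]; first by rewrite !big_nil measure0.
rewrite !big_cons; apply: le_trans (measureU2 _ _ _) _ => //.
  exact: bigsetU_measurable.
exact: leeD.
Qed.

Lemma borel_cantelli_liminf d (T : measurableType d) (R : realType)
    (P : probability T R) (A E : (set T)^nat) :
  (forall n, measurable (A n)) -> (forall n, measurable (E n)) ->
  (forall n, ~` A n `<=` E n) -> (\sum_(n <oo) P (E n) < +oo)%E ->
  P (\bigcup_N \bigcap_(n in [set n | (N <= n)%N]) A n) = 1%E.
Proof.
move=> mA mE AE sumE.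
have mlimsup : measurable (lim_sup_set E).
  by apply: bigcapT_measurable => k; apply: bigcup_measurable => j _.
have mliminf : measurable (\bigcup_N \bigcap_(n in [set n | (N <= n)%N]) A n).
  apply: bigcupT_measurable => N; apply: bigcap_measurable => //.
  by exists N => /=.
apply/eqP; rewrite eq_le probability_le1 //=.
rewrite -[X in (X <= _)%E](sube0 1) -(lim_sup_set_cvg0 mE sumE) -probability_setC //.
apply: le_measure; rewrite ?inE; [exact: measurableC | exact: mliminf |].
move=> w notE; have [N NE] : exists N, ~ (\bigcup_(j in [set j | (N <= j)%N]) E j) w.
  by apply/existsNP => allE; apply: notE => N _; apply: allE.
exists N => // n /= Nn; apply: contrapT => notA.
by apply: NE; exists n => //; apply: AE.
Qed.

Section OpenSites.
Context {R : realType} {d : measure_display} {T : measurableType d}.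
Variables (P : probability T R) (n : nat) (G : vtx n -> {RV P >-> R}).
Variables (b : R -> bool) (p : R).
Hypothesis indepG : mutually_independent P (fun x => (G x : T -> R)).
Hypothesis mb : measurable [set t | b t].
Hypothesis PbG : forall x, P [set w | b (G x w)] = p%:E.

Definition open_sites w : {set vtx n} := finset (fun x => b (G x w)).

Definition covered_event (S : {set vtx n}) := [set w | S \subset open_sites w].

Definition animal_event M := \big[setU/set0]_(S <- enum (animals n M)) covered_event S.

Lemma covered_eventE S : covered_event S =
  \bigcap_(x in [set: vtx n]) (G x @^-1` (if x \in S then [set t | b t] else setT)).
Proof.
apply/seteqP; split => w /=.
  by move=> /fintype.subsetP SV x _ /=; case: ifP => // /SV; rewrite inE.
move=> SV; apply/fintype.subsetP => x xS; rewrite inE.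
by have := SV x I; rewrite /= xS.
Qed.

Lemma measurable_covered_event S : measurable (covered_event S).
Proof.
rewrite covered_eventE; apply: fin_bigcap_measurable; first exact: finite_finset.
move=> x _; case: ifP => _; first exact: (measurable_funPTI (G x) mb).
by rewrite preimage_setT.
Qed.

Lemma P_covered_event S : P (covered_event S) = (p ^+ #|S|)%:E.
Proof.
rewrite covered_eventE indepG; last by move=> x; case: ifP.
under eq_bigr => x _.
  rewrite (_ : P _ = (if x \in S then p else 1)%:E); last first.
    by case: ifP => _; [exact: PbG | rewrite preimage_setT probability_setT].
  over.
by rewrite prodEFin -big_mkcond /= prodr_const.
Qed.

Lemma measurable_open_sites_pred (Q : pred {set vtx n}) :
  measurable [set w | Q (open_sites w)].
Proof.
have -> : [set w | Q (open_sites w)] =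
    \big[setU/set0]_(S <- enum Q) \bigcap_(x in [set: vtx n])
      (G x @^-1` [set t | b t = (x \in S)]).
  rewrite -bigcup_seq; apply/seteqP; split => w /=.
    move=> Qw; exists (open_sites w); first by rewrite /= mem_enum.
    by move=> x _ /=; rewrite inE.
  move=> [S /=]; rewrite mem_enum => QS SV.
  suff -> : open_sites w = S by [].
  by apply/setP => x; rewrite inE; apply: (SV x I).
apply: bigsetU_measurable => S _; apply: fin_bigcap_measurable.
  exact: finite_finset.
move=> x _; apply: measurable_funPTI; case: (x \in S).
  by rewrite (_ : [set t | b t = true] = [set t | b t]).
rewrite (_ : [set t | b t = false] = ~` [set t | b t]); first exact: measurableC.
by apply/seteqP; split => t /=; case: (b t).
Qed.

Lemma measurable_animal_event M : measurable (animal_event M).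
Proof. by apply: bigsetU_measurable => S _; apply: measurable_covered_event. Qed.

Lemma P_animal_event M : (P (animal_event M) <= (#|animals n M|%:R * p ^+ M)%:E)%E.
Proof.
apply: le_trans (le_measure_bigsetU _ _ measurable_covered_event) _.
rewrite big_seq (eq_bigr (fun=> (p ^+ M)%:E)); last first.
  move=> S; rewrite mem_enum => /imsetP [c]; rewrite inE => /andP [_ /eqP cM] ->.
  by have := P_covered_event (grown_set c.1 c.2); rewrite cM.
by rewrite -big_seq big_enum /= sumEFin sumr_const mulr_natl.
Qed.

Lemma animal_event_of_max_comp_size M w : (1 < M)%N ->
  ~ (max_comp_size (open_sites w) < M)%N -> animal_event M w.
Proof.
move=> M1 /negP; rewrite -leqNgt => /(animal_sub_of_max_comp_size M1) [S SM SV].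
by rewrite /animal_event -bigcup_seq; exists S; rewrite /= ?mem_enum.
Qed.

End OpenSites.

Lemma measurable_le_expR (R : realType) (a c : R) :
  measurable [set t : R | a <= expR (- (c * t))].
Proof.
have -> : [set t : R | a <= expR (- (c * t))] =
    (fun t => expR (- c * t)) @^-1` `[a, +oo[.
  by rewrite set_itvcy; apply/seteqP; split => t /=; rewrite mulNr.
have mexp : measurable_fun setT (fun t => expR (- c * t)).
  exact: measurableT_comp (measurable_realfun.mulrl_measurable _).
by rewrite -[X in measurable X]setTI; apply: mexp => //; apply: measurable_itv.
Qed.

Unset Implicit Arguments.

Theorem lemma2p2 (R : realType) (d : measure_display) (T : measurableType d)
  (P : probability T R)
  (g : forall n : nat, vtx n -> {RV P >-> R})
  (Hind : forall n : nat, mutually_independent P (fun x : vtx n => (g n x : T -> R)))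
  (Hgauss : forall (n : nat) (x : vtx n), std_gaussian P (g n x))
  (beta : R) (Hbeta : 0 < beta)
  (rho : nat -> R) (Hrho : forall n, 0 < rho n)
  (m : nat -> nat) (Hm : forall n, (1 < m n)%N)
  (r : nat -> R)
  (Hr : forall (n : nat) (x : vtx n),
     ((2 `^ (rho n * n%:R))%:E *
       P [set w | (r n <= expR (- (beta * Num.sqrt (n%:R) * g n x w)))%R] = 1)%E)
  (Hrho_ge : forall n, (0 < n)%N -> rho_plus n (m n) <= rho n) :
  P (\bigcup_N \bigcap_(n in [set n | (N <= n)%N])
       [set w | (max_comp_size
           (finset (fun x : vtx n => (r n <= expR (- (beta * Num.sqrt (n%:R) * g n x w)))%R))
           < m n)%N]) = 1%E.
Proof.
pose b n t := r n <= expR (- (beta * Num.sqrt n%:R * t)).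
pose p n := (2 `^ (rho n * n%:R))^-1 : R.
have mb n : measurable [set t | b n t] by apply: measurable_le_expR.
have PbG n x : P [set w | b n (g n x w)] = (p n)%:E.
  have pow0 : 2 `^ (rho n * n%:R) != 0 :> R by rewrite gt_eqF // powR_gt0.
  by rewrite -[RHS]mule1 -(Hr n x) muleA -EFinM mulVf // mul1e.
pose E n := animal_event (g n) (b n) (m n).
have PE n : (P (E n) <= ((n%:R ^+ 2)^-1)%:E)%E.
  apply: le_trans (P_animal_event (Hind n) (mb n) (PbG n) (m n)) _; rewrite lee_fin.
  apply: le_trans (animal_count_bound (ltnW (Hm n)) (Hrho_ge n)).
  by rewrite ler_wpM2r ?exprn_ge0 ?invr_ge0 ?powR_ge0 // ler_nat card_animals.
apply: (borel_cantelli_liminf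
  (A := fun n => [set w | (max_comp_size (open_sites (g n) (b n) w) < m n)%N]) (E := E)).
- by move=> n; have := measurable_open_sites_pred (g n) (mb n)
    (fun S => max_comp_size S < m n)%N.
- by move=> n; apply: measurable_animal_event.
- by move=> n w; apply: animal_event_of_max_comp_size.
- apply: le_lt_trans (ltry 2); apply: le_trans (nneseries_inv_sq_le2 R).
  by apply: lee_nneseries => n *; [apply: measure_ge0 | apply: PE].
Qed.
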